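(* Let $\mathbb{F}$ be a finite field and $n\ge2$. The isolated subsemigroups of $M(n,\mathbb{F})$ are exactly: $M(n,\mathbb{F})$, $\mathrm{GL}(n,\mathbb{F})$, $I_{n-1}$, and all semigroups $S(\mathcal{A},\mathcal{B})=\{A\in M(n,\mathbb{F}) : \mathrm{Im}(A)\in\mathcal{A},\ \ker(A)\in\mathcal{B}\}$, where $\mathcal{A}$ is a nonempty set of $(n-1)$-dimensional subspaces of $\mathbb{F}^n$ and $\mathcal{B}$ is a nonempty set of $1$-dimensional subspaces of $\mathbb{F}^n$ such that $V_1\not\subseteq V_2$ for every $V_1\in\mathcal{B}$ and every $V_2\in\mathcal{A}$.
   Context: $M(n,\mathbb{F})$ is the semigroup of $n\times n$ matrices over $\mathbb{F}$ under multiplication, identified with linear operators on $\mathbb{F}^n$; $\mathrm{GL}(n,\mathbb{F})$ is its group of units; $I_{n-1}$ is the set of all matrices of rank at most $n-1$. A (nonempty) subsemigroup $T$ of a semigroup $S$ is isolated if for all $x\in S$ and positive integers $m$, $x^m\in T$ implies $x\in T$. *)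

From HB Require Import structures.
From mathcomp Require Import all_boot all_algebra.
Set Implicit Arguments. Unset Strict Implicit. Unset Printing Implicit Defensive.
Import GRing.Theory.
Local Open Scope ring_scope.

(* Matrices A : 'M[F]_n act on column vectors v : 'cV_n by v |-> A *m v,
   so the matrix product is composition of operators.  Subspaces of F^n are
   represented (up to %MS row-space equality) by square matrices whose row
   space, read as transposed column vectors, is the subspace. *)

Definition mx_im (F : fieldType) (n : nat) (A : 'M[F]_n) : 'M[F]_n := A^T.
(* ker(A): {v | A v = 0}, i.e. the rows u with u *m A^T = 0. *)
Definition mx_ker (F : fieldType) (n : nat) (A : 'M[F]_n) : 'M[F]_n := kermx A^T.

Definition is_subsemigroup (F : finFieldType) (n : nat) (T : {set 'M[F]_n}) : Prop :=
  T != set0 /\ (forall A B, A \in T -> B \in T -> A *m B \in T).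

Definition is_isolated (F : finFieldType) (n : nat) (T : {set 'M[F]_n}) : Prop :=
  forall (x : 'M[F]_n) (m : nat), (0 < m)%N -> x ^+ m \in T -> x \in T.

Definition isolated_subsemigroup (F : finFieldType) (n : nat) (T : {set 'M[F]_n}) : Prop :=
  is_subsemigroup T /\ is_isolated T.

Definition GLset (F : finFieldType) (n : nat) : {set 'M[F]_n} :=
  [set A | A \in unitmx].

Definition I_rank_le (F : finFieldType) (n : nat) (k : nat) : {set 'M[F]_n} :=
  [set A | (\rank A <= k)%N].

Definition S_AB (F : finFieldType) (n : nat) (calA calB : {set 'M[F]_n}) : {set 'M[F]_n} :=
  [set A | [exists V in calA, (mx_im A == V)%MS] && [exists W in calB, (mx_ker A == W)%MS]].

(* Every matrix over a finite field has an idempotent power, so an isolated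
   subsemigroup T is governed by the idempotents it contains, and an idempotent
   of rank r is similar to [pid_mx r].  With [p = pid_mx r] and matrix units
   [E_ij], [(p + E_ij)^2 = p] for distinct [i, j >= r]; by isolation this lets T
   climb from [pid_mx r] to [pid_mx r.+1] and descend from [pid_mx r.+1],
   [pid_mx r.+2] to [pid_mx r].  Hence 0 lies in T as soon as T contains a matrix
   of rank at most n-2, or 1 and a singular matrix, and then T contains every
   singular matrix; this yields the first three families.  Otherwise all members
   of T have rank n-1 and ker x meets im y trivially for x, y in T, so a matrix z
   with im z = im x and ker z = ker y has the same image and kernel as xy; their
   idempotent powers then coincide, which puts z in T. *)

From HB Require Import structures.
From mathcomp Require Import all_boot all_algebra.
Set Implicit Arguments. Unset Strict Implicit. Unset Printing Implicit Defensive.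
Import GRing.Theory.
Local Open Scope ring_scope.

Lemma exists_idempotent_expr (R : finNzRingType) (x : R) :
  exists2 k, (0 < k)%N & x ^+ k * x ^+ k = x ^+ k.
Proof.
have [i [d [d_gt0 Ei]]] : exists i d, (0 < d)%N /\ x ^+ (i + d) = x ^+ i.
  pose f (i : 'I_#|R|.+1) := x ^+ i.
  have /injectivePn[i [j neq_ij Eij]] : ~~ injectiveb f.
    by apply/negP => /injectiveP/leq_card; rewrite card_ord ltnn.
  case: (ltngtP i j) => [lt_ij|lt_ji|/val_inj eq_ij]; last by rewrite eq_ij eqxx in neq_ij.
  - by exists i, (j - i)%N; rewrite subn_gt0 lt_ij subnKC 1?ltnW.
  - by exists j, (i - j)%N; rewrite subn_gt0 lt_ji subnKC 1?ltnW.
have shift s : (i <= s)%N -> x ^+ (s + d) = x ^+ s.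
  by move=> le_is; rewrite -(subnK le_is) -addnA !(exprD _ (s - i)) Ei.
have period c t : (i <= t)%N -> x ^+ (t + c * d) = x ^+ t.
  move=> le_it; elim: c => [|c IH]; first by rewrite addn0.
  by rewrite mulSn addnCA addnC shift ?IH // (leq_trans le_it (leq_addr _ _)).
exists (i.+1 * d)%N; first by rewrite muln_gt0.
by rewrite -exprD period // (leq_trans (leqnSn i)) // leq_pmulr.
Qed.

(* [p - f] squares to zero, so [1 + (p - f)] is a unit conjugating [f] to [p]. *)
Lemma absorbing_idempotents_similar (R : unitRingType) (p f : R) :
  p * p = p -> f * f = f -> p * f = p -> f * p = f ->
  exists2 Q, Q \is a GRing.unit & Q * f = p * Q.
Proof.
move=> pp ff pf fp; set N := p - f.
have N2 : N * N = 0 by rewrite mulrBl !mulrBr pp pf fp ff !subrr.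
exists (1 + N).
  apply/unitrP; exists (1 - N); split.
    by rewrite mulrBl mul1r mulrDr mulr1 N2 addr0 addrK.
  by rewrite mulrDl mul1r mulrBr mulr1 N2 subr0 subrK.
by rewrite mulrDl mulrDr mul1r mulr1 /N mulrBl mulrBr pf ff pp subrr addr0 addrC subrK.
Qed.

Lemma idempotent_similar_pid_mx (F : fieldType) (m : nat) (e : 'M[F]_m.+1) :
  e * e = e -> exists2 R, R \is a GRing.unit & e = R^-1 * pid_mx (\rank e) * R.
Proof.
move=> ee; set L := col_ebase e; set U := row_ebase e; set p := pid_mx (\rank e).
have LpU : L * p * U = e := mulmx_ebase e.
have uL : L \is a GRing.unit := col_ebase_unit e.
have uU : U \is a GRing.unit := row_ebase_unit e.
have pp : p * p = p by apply: pid_mx_id; apply: rank_leq_row.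
set f := U * L * p.
have pf : p * f = p.
  by apply: (mulrI uL); apply: (mulIr uU); rewrite [RHS]LpU -ee -LpU /f !mulrA.
have fp : f * p = f by rewrite /f -mulrA pp.
have ff : f * f = f by rewrite {1}/f -mulrA pf.
have [Q uQ Qf] := absorbing_idempotents_similar pp ff pf fp.
have Ue : U * e = f * U by rewrite -LpU /f !mulrA.
have QUe : Q * U * e = p * (Q * U) by rewrite -mulrA Ue mulrA Qf -mulrA.
exists (Q * U); first by rewrite unitrMr.
by rewrite -mulrA -QUe mulKr // unitrMr.
Qed.

Section ImageKernel.
Variables (F : fieldType) (n : nat).
Implicit Types A B V W : 'M[F]_n.

Lemma mxrank_im A : \rank (mx_im A) = \rank A.
Proof. exact: mxrank_tr. Qed.

Lemma mxrank_mx_ker A : \rank (mx_ker A) = (n - \rank A)%N.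
Proof. by rewrite mxrank_ker mxrank_tr. Qed.

Lemma mx_im_mul A B : (mx_im (A *m B) <= mx_im A)%MS.
Proof. by rewrite /mx_im trmx_mul submxMl. Qed.

Lemma mx_ker_mul A B : (mx_ker B <= mx_ker (A *m B))%MS.
Proof. by rewrite /mx_ker trmx_mul; apply/sub_kermxP; rewrite mulmxA mulmx_ker mul0mx. Qed.

Lemma mxrank_mul_im_ker A B :
  (\rank (A *m B) + \rank (mx_im B :&: mx_ker A))%N = \rank B.
Proof. by rewrite -mxrank_tr trmx_mul mxrank_mul_ker mxrank_tr. Qed.

Lemma mx_im_mul_eq A B : \rank (A *m B) = \rank A -> (mx_im (A *m B) == mx_im A)%MS.
Proof. by move=> rAB; rewrite -(mxrank_leqif_eq (mx_im_mul A B)) !mxrank_im rAB. Qed.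

Lemma mx_ker_mul_eq A B : \rank (A *m B) = \rank B -> (mx_ker (A *m B) == mx_ker B)%MS.
Proof.
by move=> rAB; rewrite andbC -(mxrank_leqif_eq (mx_ker_mul A B)) !mxrank_mx_ker rAB.
Qed.

Lemma mxrank_cap_line V W : \rank W = 1%N -> (\rank (V :&: W) == 0)%N = ~~ (W <= V)%MS.
Proof.
move=> rW; have [] := mxrank_leqif_eq (capmxSr V W).
rewrite rW capmxSr sub_capmx submx_refl andbT.
by case: (\rank _) => [|[|]] //= _ <-.
Qed.

Lemma exists_mx_im_ker V W : (V :&: W = 0)%MS -> (\rank V + \rank W)%N = n ->
  exists A, (mx_im A == V)%MS /\ (mx_ker A == W)%MS.
Proof.
move=> capVW rVW; exists (proj_mx V W)^T; rewrite /mx_im /mx_ker trmxK.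
have imP : (proj_mx V W == V)%MS.
  rewrite -{1}[proj_mx V W]mul1mx proj_mx_sub /=.
  by rewrite -{1}(proj_mx_id capVW (submx_refl V)) submxMl.
split=> //; have kerP : (W <= kermx (proj_mx V W))%MS.
  by apply/sub_kermxP; rewrite proj_mx_0.
by rewrite andbC -(mxrank_leqif_eq kerP) mxrank_ker (eqmx_rank imP) -[X in (X - _)%N]rVW addKn.
Qed.

End ImageKernel.

Section ImageKernelExpr.
Variables (F : fieldType) (m : nat).
Implicit Types x e f : 'M[F]_m.+1.

Lemma mxrank_expr_leq x k : (0 < k)%N -> (\rank (x ^+ k) <= \rank x)%N.
Proof. by case: k => // k _; rewrite exprSr mxrankM_maxr. Qed.

Lemma mxrank_leq_pred_unit x : (\rank x <= m)%N = (x \notin unitmx).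
Proof. by rewrite -row_free_unit /row_free -ltnS ltn_neqAle rank_leq_row andbT. Qed.

Lemma mx_im_ker_expr x k : (0 < k)%N -> \rank (x ^+ k) = \rank x ->
  (mx_im (x ^+ k) == mx_im x)%MS /\ (mx_ker (x ^+ k) == mx_ker x)%MS.
Proof.
case: k => // k _ rxk; split.
  by rewrite exprS mx_im_mul_eq // mulmxE -exprS.
by rewrite exprSr mx_ker_mul_eq // mulmxE -exprSr.
Qed.

Lemma mxrank_expr_im_ker x k : \rank (mx_im x :&: mx_ker x) = 0%N -> (0 < k)%N ->
  \rank (x ^+ k) = \rank x.
Proof.
move=> rx0; elim: k => // [[|k]] IH _; first by rewrite expr1.
have := mxrank_mul_im_ker x (x ^+ k.+1); rewrite -IH // => <-.
suff -> : \rank (mx_im (x ^+ k.+1) :&: mx_ker x) = 0%N by rewrite addn0 exprS.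
apply/eqP; rewrite -leqn0 -rx0 mxrankS // capmxS // exprS; exact: mx_im_mul.
Qed.

Lemma idempotent_eq_im_ker e f : e * e = e -> f * f = f ->
  (mx_im e <= mx_im f)%MS -> (mx_ker e <= mx_ker f)%MS -> e = f.
Proof.
rewrite /mx_im /mx_ker => ee ff imef keref; apply: trmx_inj.
have EE : e^T *m e^T = e^T by rewrite -trmx_mul mulmxE ee.
have EF : e^T *m f^T = e^T.
  by have [D ->] := submxP imef; rewrite -mulmxA -trmx_mul mulmxE ff.
have : (1%:M - e^T) *m f^T = 0.
  apply/sub_kermxP; apply: submx_trans keref.
  by apply/sub_kermxP; rewrite mulmxBl mul1mx EE subrr.
by rewrite mulmxBl mul1mx EF => /eqP; rewrite subr_eq0 => /eqP ->.
Qed.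

End ImageKernelExpr.

Section PidDelta.
Variables (R : pzSemiRingType) (n : nat).
Implicit Types i j : 'I_n.

Lemma mul_pid_delta_mx r i j :
  pid_mx r *m delta_mx i j = (if (i < r)%N then delta_mx i j else 0) :> 'M[R]_n.
Proof.
apply/matrixP=> k l; rewrite !mxE (bigD1 i) //= big1 => [|t /negbTE nti]; last first.
  by rewrite !mxE nti /= mulr0.
rewrite !mxE eqxx addr0 /=.
have [->|/negbTE nki] := eqVneq k i.
  by case: ifP => ilr; rewrite ?mxE ?eqxx ?ilr ?mul1r ?mul0r.
have nki' : (k == i :> nat) = false by rewrite val_eqE.
by rewrite nki' mul0r; case: ifP; rewrite ?mxE ?nki.
Qed.

Lemma mul_delta_pid_mx r i j :
  delta_mx i j *m pid_mx r = (if (j < r)%N then delta_mx i j else 0) :> 'M[R]_n.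
Proof.
apply/matrixP=> k l; rewrite !mxE (bigD1 j) //= big1 => [|t /negbTE ntj]; last first.
  by rewrite !mxE ntj andbF mul0r.
rewrite !mxE eqxx andbT addr0 /=.
have [<-|/negbTE njl] := eqVneq j l.
  by case: ifP => jlr; rewrite ?mxE ?eqxx ?jlr ?andbT ?mulr1 ?mulr0.
have njl' : (j == l :> nat) = false by rewrite val_eqE.
by rewrite njl' mulr0; case: ifP; rewrite ?mxE // (eq_sym l) njl andbF.
Qed.

Lemma pid_mxS i : pid_mx i.+1 = pid_mx i + delta_mx i i :> 'M[R]_n.
Proof.
apply/matrixP=> k l; rewrite !mxE ltnS leq_eqVlt !val_eqE.
have [<-|/negbTE nkl] := eqVneq k l.
  by case: eqP => [->|_]; rewrite ?ltnn /= ?add0r ?addr0.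
rewrite /= add0r; case: eqP => // eki; case: eqP => // eli.
by rewrite eki eli eqxx in nkl.
Qed.

Lemma pid_mx_add_delta_sqr r i j : (r <= i)%N -> (r <= j)%N -> i != j ->
  (pid_mx r + delta_mx i j) *m (pid_mx r + delta_mx i j) = pid_mx r :> 'M[R]_n.
Proof.
move=> ri rj nij; have rn : (r <= n)%N by rewrite (leq_trans ri) // ltnW.
rewrite mulmxDl !mulmxDr pid_mx_id // mul_pid_delta_mx mul_delta_pid_mx !ltnNge ri rj.
by rewrite mul_delta_mx_0 1?eq_sym // add0r !addr0.
Qed.

End PidDelta.

Definition conj_set (F : finFieldType) (n : nat) (R : 'M[F]_n.+1) (T : {set 'M[F]_n.+1}) :
  {set 'M[F]_n.+1} := [set y | R^-1 * y * R \in T].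

Section IsolatedSubsemigroup.
Variables (F : finFieldType) (m : nat).
Local Notation n := m.+1.
Local Notation M := 'M[F]_n.
Variable T : {set M}.
Hypothesis mulT : {in T &, forall x y, x * y \in T}.
Hypothesis isoT : is_isolated T.
Implicit Types x y : M.

Lemma exprn_in x k : x \in T -> (0 < k)%N -> x ^+ k \in T.
Proof.
move=> xT; elim: k => // [[|k]] IH _; first by rewrite expr1.
by rewrite exprS mulT ?IH.
Qed.

Lemma idempotent_expr_in x :
  exists k, [/\ (0 < k)%N, x ^+ k * x ^+ k = x ^+ k & (x ^+ k \in T) = (x \in T)].
Proof.
have [k k_gt0 idk] := exists_idempotent_expr x; exists k; split=> //.
by apply/idP/idP => [/isoT|/exprn_in]; apply.
Qed.

Lemma unit_in x : x \in unitmx -> (x \in T) = (1 \in T).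
Proof.
move=> ux; have [k [k_gt0 idk <-]] := idempotent_expr_in x.
suff -> : x ^+ k = 1 by [].
by apply: (mulrI (unitrX k ux)); rewrite idk mulr1.
Qed.

Lemma mem_im_ker_eq x y : (mx_im x == mx_im y)%MS -> (mx_ker x == mx_ker y)%MS ->
  \rank (mx_im x :&: mx_ker x) = 0%N -> (x \in T) = (y \in T).
Proof.
move=> /eqmxP imxy /eqmxP kerxy rx0.
have ry0 : \rank (mx_im y :&: mx_ker y) = 0%N by rewrite -(cap_eqmx imxy kerxy).
have [a [a_gt0 ida <-]] := idempotent_expr_in x.
have [b [b_gt0 idb <-]] := idempotent_expr_in y.
have [ima kera] := mx_im_ker_expr a_gt0 (mxrank_expr_im_ker rx0 a_gt0).
have [imb kerb] := mx_im_ker_expr b_gt0 (mxrank_expr_im_ker ry0 b_gt0).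
congr (_ \in T); apply: idempotent_eq_im_ker ida idb _ _.
  by rewrite (eqmxP ima) imxy -(eqmxP imb).
by rewrite (eqmxP kera) kerxy -(eqmxP kerb).
Qed.

Lemma pid_mx_succ_in r : (r < m)%N -> pid_mx r \in T -> pid_mx r.+1 \in T.
Proof.
move=> lt_rm pT; set i : 'I_n := inord r; set j : 'I_n := inord r.+1.
have [ri rj] : (i : nat) = r /\ (j : nat) = r.+1 by rewrite !inordK // ltnW.
have nji : j != i by rewrite -val_eqE /= ri rj neq_ltn ltnSn orbT.
have sq_ij : (pid_mx r + delta_mx i j) ^+ 2 = pid_mx r :> M.
  by rewrite expr2 -mulmxE pid_mx_add_delta_sqr ?ri ?rj // eq_sym.
have sq_ji : (pid_mx r + delta_mx j i) ^+ 2 = pid_mx r :> M.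
  by rewrite expr2 -mulmxE pid_mx_add_delta_sqr ?ri ?rj.
have ijT : pid_mx r + delta_mx i j \in T by apply: (@isoT _ 2%N); rewrite ?sq_ij.
have jiT : pid_mx r + delta_mx j i \in T by apply: (@isoT _ 2%N); rewrite ?sq_ji.
have := mulT ijT jiT; rewrite mulrDl !mulrDr -!mulmxE pid_mx_id ?(leqW (ltnW lt_rm)) //.
rewrite mul_pid_delta_mx mul_delta_pid_mx rj ltnNge leqnSn mul_delta_mx !addr0 add0r.
by rewrite -ri -pid_mxS.
Qed.

Lemma pid_mx_pred_in r : (r < m)%N -> pid_mx r.+1 \in T -> pid_mx r.+2 \in T ->
  pid_mx r \in T.
Proof.
move=> lt_rm p1T p2T; set k : 'I_n := inord r; set i : 'I_n := inord r.+1.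
have [rk ri] : (k : nat) = r /\ (i : nat) = r.+1 by rewrite !inordK // ltnW.
have nik : i != k by rewrite -val_eqE /= rk ri neq_ltn ltnSn orbT.
have nki : k != i by rewrite eq_sym.
have [kr ir] : (k < r)%N = false /\ (i < r)%N = false.
  by rewrite rk ri ltnn ltnNge leqnSn.
have le_rn : (r <= n)%N := leqW (ltnW lt_rm).
(* [x^2 = pid_mx r.+2], and [x * pid_mx r.+1 = q + E_ik] squares to [q]. *)
set q : M := pid_mx r; set x := q + delta_mx k i + delta_mx i k.
have p1 : pid_mx r.+1 = q + delta_mx k k :> M by rewrite -[in LHS]rk pid_mxS rk.
have p2 : pid_mx r.+2 = q + delta_mx k k + delta_mx i i :> M.
  by rewrite -p1 -[in LHS]ri pid_mxS ri.
have xT : x \in T.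
  apply: (@isoT _ 2%N) => //; suff -> : x ^+ 2 = pid_mx r.+2 by [].
  rewrite p2 expr2 /x !mulrDl !mulrDr -!mulmxE pid_mx_id //.
  rewrite !mul_pid_delta_mx !mul_delta_pid_mx kr ir !mul_delta_mx !mul_delta_mx_0 //.
  by rewrite !addr0 !add0r.
have qikT : q + delta_mx i k \in T.
  have := mulT xT p1T; congr (_ \in T).
  rewrite p1 /x !mulrDl !mulrDr -!mulmxE pid_mx_id //.
  rewrite !mul_pid_delta_mx !mul_delta_pid_mx kr ir mul_delta_mx !mul_delta_mx_0 //.
  by rewrite !addr0 !add0r.
have := exprn_in (k := 2) qikT isT; congr (_ \in T).
by rewrite expr2 -mulmxE pid_mx_add_delta_sqr ?rk ?ri ?leqnSn.
Qed.

Lemma zero_in_of_pid_mx r : (r < n)%N -> pid_mx r \in T -> pid_mx r.+1 \in T -> 0 \in T.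
Proof.
elim: r => [|r IH] lt_rn p0T p1T; first by rewrite pid_mx_0 in p0T.
exact: IH (ltnW lt_rn) (pid_mx_pred_in lt_rn p0T p1T) p0T.
Qed.

Lemma pid_mx_in_of_zero r : (r < n)%N -> 0 \in T -> pid_mx r \in T.
Proof.
move=> + zT; elim: r => [|r IH] lt_rn; first by rewrite pid_mx_0.
exact: pid_mx_succ_in lt_rn (IH (ltnW lt_rn)).
Qed.

Lemma exists_pid_mx_conj x : exists R r, [/\ R \is a GRing.unit, (r <= \rank x)%N
  & (x \in T) = (pid_mx r \in conj_set R T)].
Proof.
have [k [k_gt0 idk <-]] := idempotent_expr_in x.
have [R uR ->] := idempotent_similar_pid_mx idk.
by exists R, (\rank (x ^+ k)); rewrite ?inE ?mxrank_expr_leq.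
Qed.

End IsolatedSubsemigroup.

Section ConjSet.
Variables (F : finFieldType) (m : nat) (R : 'M[F]_m.+1) (T : {set 'M[F]_m.+1}).
Hypothesis uR : R \is a GRing.unit.

Lemma conj_set_mul : {in T &, forall x y, x * y \in T} ->
  {in conj_set R T &, forall x y, x * y \in conj_set R T}.
Proof. by move=> mulT x y; rewrite !inE => xT yT; have := mulT _ _ xT yT; rewrite !mulrA mulrK. Qed.

Lemma conj_set_isolated : is_isolated T -> is_isolated (conj_set R T).
Proof.
move=> isoT x k k_gt0; rewrite !inE => xkT; apply: isoT k_gt0 _.
suff -> : (R^-1 * x * R) ^+ k = R^-1 * x ^+ k * R by [].
elim: k {xkT} => [|k IH]; first by rewrite !expr0 mulr1 mulVr.
by rewrite !exprS IH !mulrA mulrK.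
Qed.

Lemma conj_set0 : (0 \in conj_set R T) = (0 \in T).
Proof. by rewrite inE mulr0 mul0r. Qed.

Lemma conj_set1 : (1 \in conj_set R T) = (1 \in T).
Proof. by rewrite inE mulr1 mulVr. Qed.

End ConjSet.

Section SingularMembers.
Variables (F : finFieldType) (m : nat).
Local Notation n := m.+1.
Variable T : {set 'M[F]_n}.
Hypothesis mulT : {in T &, forall x y, x * y \in T}.
Hypothesis isoT : is_isolated T.
Implicit Types x : 'M[F]_n.

Lemma zero_in_of_mxrank_lt x : x \in T -> (\rank x < m)%N -> 0 \in T.
Proof.
have [R [r [uR le_r ->]]] := exists_pid_mx_conj mulT isoT x.
move=> pT lt_xm; have lt_rm := leq_ltn_trans le_r lt_xm.
have mulT' := conj_set_mul uR mulT; have isoT' := conj_set_isolated uR isoT.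
rewrite -(conj_set0 R); apply: (zero_in_of_pid_mx mulT' isoT' (leqW lt_rm) pT).
exact: (pid_mx_succ_in mulT' isoT' lt_rm pT).
Qed.

Lemma singular_in_of_zero x : 0 \in T -> (\rank x < n)%N -> x \in T.
Proof.
have [R [r [uR le_r ->]]] := exists_pid_mx_conj mulT isoT x.
move=> zT lt_xn.
apply: (pid_mx_in_of_zero (conj_set_mul uR mulT) (conj_set_isolated uR isoT)).
  exact: leq_ltn_trans le_r lt_xn.
by rewrite conj_set0.
Qed.

Lemma zero_in_of_one_singular x : 1 \in T -> x \in T -> (\rank x < n)%N -> 0 \in T.
Proof.
have [R [r [uR le_r ->]]] := exists_pid_mx_conj mulT isoT x.
move=> oT pT lt_xn; have lt_rn := leq_ltn_trans le_r lt_xn.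
have mulT' := conj_set_mul uR mulT; have isoT' := conj_set_isolated uR isoT.
rewrite -(conj_set0 R); apply: (zero_in_of_pid_mx mulT' isoT' lt_rn pT).
have [lt_rm|] := ltnP r m; first exact: (pid_mx_succ_in mulT' isoT' lt_rm pT).
rewrite leq_eqVlt ltnNge -ltnS lt_rn orbF => /eqP <-.
by rewrite pid_mx_1 conj_set1.
Qed.

End SingularMembers.

Lemma S_ABP (F : finFieldType) (n : nat) (calA calB : {set 'M[F]_n}) A :
  reflect ((exists2 V, V \in calA & (mx_im A == V)%MS) /\
           (exists2 W, W \in calB & (mx_ker A == W)%MS))
    (A \in S_AB calA calB).
Proof.
by rewrite inE; apply: (iffP andP) => -[hV hW]; split; apply/exists_inP.
Qed.

Section HyperplaneCase.
Variables (F : finFieldType) (m : nat).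
Local Notation n := m.+1.
Variable T : {set 'M[F]_n}.
Hypothesis mulT : {in T &, forall x y, x * y \in T}.
Hypothesis isoT : is_isolated T.
Hypothesis zero_notin : 0 \notin T.
Hypothesis unit_notin : {in T, forall x, x \notin unitmx}.

Lemma mxrank_in x : x \in T -> \rank x = m.
Proof.
move=> xT; apply/eqP; rewrite eqn_leq mxrank_leq_pred_unit unit_notin // leqNgt.
apply: contraNN zero_notin => lt_xm; exact: (zero_in_of_mxrank_lt mulT isoT xT lt_xm).
Qed.

Lemma mxrank_im_cap_ker_in x y : x \in T -> y \in T ->
  \rank (mx_im y :&: mx_ker x) = 0%N.
Proof.
move=> xT yT; have := mxrank_mul_im_ker x y.
by rewrite (mxrank_in (mulT xT yT)) (mxrank_in yT) => /(congr1 (subn^~ m)); rewrite addKn subnn.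
Qed.

Lemma S_AB_im_ker : T = S_AB [set mx_im x | x in T] [set mx_ker x | x in T].
Proof.
apply/setP=> z; apply/idP/S_ABP => [zT|].
  by split; [exists (mx_im z) | exists (mx_ker z)]; rewrite ?imset_f ?submx_refl.
case=> -[_ /imsetP[x xT ->] imz] [_ /imsetP[y yT ->] kerz].
have xyT := mulT xT yT; have rxy : \rank (x *m y) = m := mxrank_in xyT.
have imxy : (mx_im (x *m y) == mx_im x)%MS by rewrite mx_im_mul_eq ?rxy ?mxrank_in.
have kerxy : (mx_ker (x *m y) == mx_ker y)%MS by rewrite mx_ker_mul_eq ?rxy ?mxrank_in.
rewrite (mem_im_ker_eq mulT isoT (y := x * y)) //.
- exact/eqmxP/(eqmx_trans (eqmxP imz))/eqmx_sym/eqmxP.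
- exact/eqmxP/(eqmx_trans (eqmxP kerz))/eqmx_sym/eqmxP.
by rewrite (cap_eqmx (eqmxP imz) (eqmxP kerz)) (mxrank_im_cap_ker_in yT xT).
Qed.

End HyperplaneCase.

Section Classification.
Variables (F : finFieldType) (m : nat).
Local Notation n := m.+1.
Local Notation M := 'M[F]_n.

Lemma isolated_subsemigroup_setT : isolated_subsemigroup [set: M].
Proof.
split; [split|] => [|A B _ _|x k _ _]; rewrite ?inE //.
by apply/set0Pn; exists 0; rewrite inE.
Qed.

Lemma isolated_subsemigroup_GL : isolated_subsemigroup (GLset F n).
Proof.
split; [split|].
- by apply/set0Pn; exists 1; rewrite inE unitmx1.
- by move=> A B; rewrite !inE unitmx_mul => -> ->.
- by move=> x k k_gt0; rewrite !inE unitrX_pos.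
Qed.

Lemma isolated_subsemigroup_singular : isolated_subsemigroup (I_rank_le F n m).
Proof.
split; [split|].
- by apply/set0Pn; exists 0; rewrite inE mxrank0.
- by move=> A B; rewrite !inE => rA _; apply: leq_trans (mxrankM_maxl _ _) rA.
- by move=> x k k_gt0; rewrite !inE !mxrank_leq_pred_unit unitrX_pos.
Qed.

Lemma isolated_subsemigroup_S_AB (calA calB : {set M}) :
  calA != set0 /\ calB != set0 ->
  (forall V, V \in calA -> \rank V = m) ->
  (forall W, W \in calB -> \rank W = 1%N) ->
  (forall W V, W \in calB -> V \in calA -> ~~ (W <= V)%MS) ->
  isolated_subsemigroup (S_AB calA calB).
Proof.
move=> [nA nB] rkA rkB dAB.
have cap0 V W : V \in calA -> W \in calB -> \rank (V :&: W) = 0%N.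
  by move=> VA WB; apply/eqP; rewrite mxrank_cap_line ?rkB ?dAB.
have rk_in A : A \in S_AB calA calB -> \rank A = m.
  by case/S_ABP => -[V VA /eqmx_rank imA] _; rewrite -mxrank_im imA rkA.
split; [split|].
- have [V VA] := set0Pn _ nA; have [W WB] := set0Pn _ nB.
  have capVW : (V :&: W = 0)%MS by apply/eqP; rewrite -mxrank_eq0 cap0.
  have rVW : (\rank V + \rank W)%N = n by rewrite rkA // rkB // addn1.
  have [A [imA kerA]] := exists_mx_im_ker capVW rVW.
  by apply/set0Pn; exists A; apply/S_ABP; split; [exists V | exists W].
- move=> A B AS BS; have [rA rB] := (rk_in _ AS, rk_in _ BS).
  case/S_ABP: AS => -[V VA imA] [W WB kerA]; case/S_ABP: BS => -[V' V'A imB] [W' W'B kerB].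
  have rAB : \rank (A *m B) = m.
    have := mxrank_mul_im_ker A B.
    by rewrite (cap_eqmx (eqmxP imB) (eqmxP kerA)) cap0 // addn0 rB.
  have /eqmxP imAB := mx_im_mul_eq (etrans rAB (esym rA)).
  have /eqmxP kerAB := mx_ker_mul_eq (etrans rAB (esym rB)).
  apply/S_ABP; split; [exists V | exists W'] => //.
    exact/eqmxP/(eqmx_trans imAB (eqmxP imA)).
  exact/eqmxP/(eqmx_trans kerAB (eqmxP kerB)).
- move=> x k k_gt0 xkS; have rxk := rk_in _ xkS.
  have rx : \rank x = m.
    apply/eqP; rewrite eqn_leq mxrank_leq_pred_unit -(unitrX_pos x k_gt0).
    by rewrite -mxrank_leq_pred_unit rxk leqnn -[X in (X <= _)%N]rxk mxrank_expr_leq.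
  have [imk kerk] := mx_im_ker_expr k_gt0 (etrans rxk (esym rx)).
  case/S_ABP: xkS => -[V VA imV] [W WB kerW]; apply/S_ABP.
  split; [exists V | exists W] => //.
    exact/eqmxP/(eqmx_trans (eqmx_sym (eqmxP imk)) (eqmxP imV)).
  exact/eqmxP/(eqmx_trans (eqmx_sym (eqmxP kerk)) (eqmxP kerW)).
Qed.

Lemma isolated_subsemigroup_cases (T : {set M}) : isolated_subsemigroup T ->
  [\/ T = [set: M], T = GLset F n, T = I_rank_le F n m
    | exists calA calB : {set M},
        [/\ calA != set0 /\ calB != set0,
            (forall V, V \in calA -> \rank V = m),
            (forall W, W \in calB -> \rank W = 1%N),
            (forall W V, W \in calB -> V \in calA -> ~~ (W <= V)%MS)
          & T = S_AB calA calB]].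
Proof.
move=> [[nT mulT] isoT]; have {}mulT : {in T &, forall x y, x * y \in T} := mulT.
have unit_in x := unit_in mulT isoT (x := x).
have [zT|zNT] := boolP (0 \in T); have [oT|oNT] := boolP (1 \in T).
- apply: Or41; apply/setP => x; rewrite inE.
  have [/unit_in -> //|ux] := boolP (x \in unitmx).
  by apply: singular_in_of_zero; rewrite // ltnS mxrank_leq_pred_unit.
- apply: Or43; apply/setP => x; rewrite inE mxrank_leq_pred_unit.
  apply/idP/idP => [xT|]; first by apply: contraNN oNT => /unit_in <-.
  by rewrite -mxrank_leq_pred_unit -ltnS; apply: singular_in_of_zero.
- apply: Or42; apply/setP => x; rewrite inE.
  apply/idP/idP => [xT|/unit_in ->//]; apply: contraNT zNT => ux.
  by apply: zero_in_of_one_singular xT _; rewrite // ltnS mxrank_leq_pred_unit.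
have unit_notin : {in T, forall x, x \notin unitmx}.
  by move=> x xT; apply: contraNN oNT => /unit_in <-.
have rkT := mxrank_in mulT isoT zNT unit_notin.
apply: Or44; exists [set mx_im x | x in T], [set mx_ker x | x in T]; split.
- have [x xT] := set0Pn _ nT.
  by split; apply/set0Pn; [exists (mx_im x) | exists (mx_ker x)]; apply: imset_f.
- by move=> _ /imsetP[x xT ->]; rewrite mxrank_im rkT.
- by move=> _ /imsetP[x xT ->]; rewrite mxrank_mx_ker rkT // subSnn.
- move=> _ _ /imsetP[x xT ->] /imsetP[y yT ->].
  rewrite -mxrank_cap_line; first by rewrite (mxrank_im_cap_ker_in mulT isoT zNT unit_notin).
  by rewrite mxrank_mx_ker rkT // subSnn.
exact: S_AB_im_ker.
Qed.

End Classification.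

Theorem theorem28 (F : finFieldType) (n : nat) (hn : (2 <= n)%N) (T : {set 'M[F]_n}) :
  isolated_subsemigroup T <->
  [\/ T = [set: 'M[F]_n],
      T = GLset F n,
      T = I_rank_le F n n.-1
    | exists calA calB : {set 'M[F]_n},
        [/\ calA != set0 /\ calB != set0,
            (forall V, V \in calA -> \rank V = n.-1),
            (forall W, W \in calB -> \rank W = 1%N),
            (forall W V, W \in calB -> V \in calA -> ~~ (W <= V)%MS)
          & T = S_AB calA calB]].
Proof.
case: n hn T => [|m] // _ T; split; first exact: isolated_subsemigroup_cases.
case=> [->|->|->|[calA [calB [nAB rkA rkB dAB ->]]]].
- exact: isolated_subsemigroup_setT.
- exact: isolated_subsemigroup_GL.
- exact: isolated_subsemigroup_singular.
- exact: isolated_subsemigroup_S_AB.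
Qed.
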